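(* Let $d\ge1$ and $n>1$ be integers with prime factorization $n=p_1^{\alpha_1}\cdots p_s^{\alpha_s}$, and put $t=\prod_{i=1}^s p_i^{\alpha_i+\lfloor\log_{p_i} d\rfloor}$. Then for every (closed) simplex $\Delta\subset\mathbb{R}^d$ of any dimension whose vertices lie in $\mathbb{Z}^d$, the number of points of $\mathbb{Z}^d$ in $t\Delta$ is congruent to $1$ modulo $n$.
   Context: For a set $X\subseteq\mathbb{R}^d$ and $t>0$, $tX=\{tx : x\in X\}$ denotes the image of $X$ under the homothety with center at the origin and ratio $t$. $\lfloor x\rfloor$ denotes the integer part of $x$. *)

From HB Require Import structures.
From mathcomp Require Import all_boot all_order all_algebra.
Set Implicit Arguments. Unset Strict Implicit. Unset Printing Implicit Defensive.
Import Order.TTheory GRing.Theory Num.Theory.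

Definition tfactor (n d : nat) : nat :=
  \prod_(p <- primes n) p ^ (logn p n + trunc_log p d).

Local Open Scope ring_scope.

(* Vertices of the simplex = rows of V (k+1 integer points of Z^d), viewed in R^d. *)
Definition vertR (R : realFieldType) (d k : nat) (V : 'M[int]_(k.+1, d)) : 'M[R]_(k.+1, d) :=
  map_mx (fun z : int => z%:~R) V.

(* affinely independent vertices: the homogenised vectors (v_i, 1) are linearly independent *)
Definition affinely_independent (R : realFieldType) (d k : nat) (V : 'M[int]_(k.+1, d)) : bool :=
  row_free (row_mx (vertR R V) (const_mx 1 : 'cV[R]_(k.+1))).

Definition in_dilated_simplex (R : realFieldType) (d k : nat) (t : nat)
    (V : 'M[int]_(k.+1, d)) (x : 'rV[int]_d) : Prop :=
  exists lam : 'I_k.+1 -> R,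
    (forall i, 0 <= lam i) /\ \sum_i lam i = 1 /\
    map_mx (fun z : int => z%:~R) x = t%:R *: \sum_i (lam i *: row i (vertR R V)).

From HB Require Import structures.
From mathcomp Require Import all_boot all_order all_algebra.
From Stdlib Require Import ClassicalEpsilon.
Import Order.TTheory GRing.Theory Num.Theory.
Set Implicit Arguments. Unset Strict Implicit. Unset Printing Implicit Defensive.

(* The lattice points of [t] Δ are the points at height [t] of the cone spanned by
   the vectors [w_i = (v_i, 1)] of Z^(d+1).  These being linearly independent, every
   lattice point of the cone is uniquely [y + \sum_i c_i w_i] with [c] in N^(k+1)
   and [y] a lattice point of the half-open parallelepiped
   [{\sum_i π_i w_i | 0 <= π_i < 1}]; the height [h y] of such a [y] lies in [0..k]
   and vanishes only at [y = 0].  Hence #(tΔ ∩ Z^d) = \sum_y 'C(t - h y + k, k).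
   If [p^α] exactly divides [n], the factor [p^(α + trunc_log p d)] of [t] forces
   [p^α %| 'C(t, i)] for [0 < i <= d], so by Vandermonde
   ['C(t + j, k) = (j == k) %[mod n]] for [j <= k <= d]: only [y = 0] contributes,
   and it contributes 1. *)

Lemma tfactor_gt0 n d : 0 < tfactor n d.
Proof.
rewrite /tfactor big_seq; apply: prodn_cond_gt0 => p.
by rewrite mem_primes => /andP[/prime_gt0 p_gt0 _]; rewrite expn_gt0 p_gt0.
Qed.

Lemma pfactor_dvdn_tfactor n d p :
  p \in primes n -> p ^ (logn p n + trunc_log p d) %| tfactor n d.
Proof. by move=> pn; rewrite /tfactor (big_rem p) //= dvdn_mulr. Qed.

Lemma tfactor_gt n d : 1 < n -> d < tfactor n d.
Proof.
move=> n_gt1; have p_pr := pdiv_prime n_gt1.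
have pn : pdiv n \in primes n by rewrite mem_primes p_pr pdiv_dvd ltnW.
apply: leq_trans (trunc_log_ltn d (prime_gt1 p_pr)) _.
apply: leq_trans (dvdn_leq (tfactor_gt0 n d) (pfactor_dvdn_tfactor d pn)).
by rewrite leq_pexp2l ?prime_gt0 // addnC -addn1 leq_add2l logn_gt0.
Qed.

Lemma dvdn_bin_tfactor n d i : 1 < n -> 0 < i <= d -> n %| 'C(tfactor n d, i).
Proof.
move=> n_gt1 /andP[i_gt0 le_id]; set t := tfactor n d.
have C_gt0 : 0 < 'C(t, i).
  by rewrite bin_gt0 (leq_trans le_id) // ltnW // tfactor_gt.
apply/dvdn_partP => [|p pn]; first exact: ltnW.
have p_pr : prime p by move: pn; rewrite mem_primes => /andP[].
have le_logi : logn p i <= trunc_log p d.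
  apply: trunc_log_max; first exact: prime_gt1.
  exact: leq_trans (dvdn_leq i_gt0 (pfactor_dvdnn p i)) le_id.
have : p ^ (logn p n + trunc_log p d) %| i * 'C(t, i).
  case: i i_gt0 {le_id le_logi C_gt0} => // i _.
  by rewrite -mul_bin_diag dvdn_mulr // pfactor_dvdn_tfactor.
rewrite p_part !pfactor_dvdn ?muln_gt0 ?i_gt0 // lognM // => le_sum.
rewrite -(leq_add2r (trunc_log p d)) (leq_trans le_sum) //.
by rewrite addnC leq_add2l.
Qed.

(* Vandermonde: only the term ['C(t, 0) * 'C(j, k)] survives modulo [n]. *)
Lemma bin_tfactorD n d j k : 1 < n -> k <= d -> j <= k ->
  'C(tfactor n d + j, k) = (j == k) %[mod n].
Proof.
move=> n_gt1 le_kd le_jk; rewrite -binomial.Vandermonde big_ord_recl bin0 mul1n subn0.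
have /dvdnP[q ->] : n %| \sum_(i < k) 'C(tfactor n d, bump 0 i) * 'C(j, k - bump 0 i).
  apply: dvdn_sum => i _; apply/dvdn_mulr/dvdn_bin_tfactor => //.
  by rewrite /bump add1n /= (leq_trans _ le_kd).
rewrite addnC modnMDl; case: ltngtP le_jk => // [lt_jk _| -> _].
  by rewrite bin_small.
by rewrite binn.
Qed.

Fixpoint compositions (k m : nat) : seq (seq nat) :=
  if k is k'.+1 then [seq a :: c | a <- iota 0 m.+1, c <- compositions k' (m - a)]
  else [:: [:: m]].

Lemma compositionsS k m : compositions k.+1 m =
  [seq a :: c | a <- iota 0 m.+1, c <- compositions k (m - a)].
Proof. by []. Qed.

Lemma mem_compositions k m c :
  (c \in compositions k m) = (size c == k.+1) && (sumn c == m).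
Proof.
elim: k m c => [|k IHk] m c.
  rewrite /= inE.
  by case: c => [|x [|y c]] //=; rewrite eqseq_cons ?andbF // addn0 andbT.
rewrite compositionsS; apply/allpairsPdep/idP => [[a [c' [am c'm ->]]] | ].
  move: am c'm; rewrite mem_iota ltnS IHk => /andP[_ le_am] /andP[/eqP sz /eqP sm] /=.
  by rewrite sz sm subnKC // !eqxx.
case: c => [|a c] // /andP[sz /eqP <-]; exists a, c; split => //.
  by rewrite mem_iota add0n ltnS /= leq_addr.
by rewrite IHk /= addKn -eqSS sz eqxx.
Qed.

Lemma compositions_uniq k m : uniq (compositions k m).
Proof.
elim: k m => [|k IHk] m //; rewrite compositionsS.
apply: allpairs_uniq_dep => //; first exact: iota_uniq.
by move=> [a c] [b c'] _ _ /= [-> ->].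
Qed.

Lemma sum_bin_hockey_stick k m :
  \sum_(a < m.+1) 'C(m - a + k, k) = 'C(m + k.+1, k.+1).
Proof.
elim: m => [|m IHm]; first by rewrite big_ord_recl big_ord0 addn0 !binn.
rewrite big_ord_recl /= subn0.
under eq_bigr => i _ do rewrite /bump /= add1n subSS.
by rewrite IHm [in RHS]addSn binS addnS addnC.
Qed.

Lemma size_compositions k m : size (compositions k m) = 'C(m + k, k).
Proof.
elim: k m => [|k IHk] m; first by rewrite bin0.
rewrite compositionsS size_allpairs_dep -sum_bin_hockey_stick sumnE big_map.
rewrite -[iota 0 m.+1]/(index_iota 0 m.+1) big_mkord.
by apply: eq_bigr => a _; rewrite IHk.
Qed.

Local Open Scope ring_scope.

Local Notation intmx R := (map_mx (fun z : int => z%:~R : R)).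

Lemma intmx_inj (R : numDomainType) m n : injective (intmx R : 'M[int]_(m, n) -> _).
Proof.
move=> A B /matrixP eqAB; apply/matrixP => i j.
by have := eqAB i j; rewrite !mxE => /intr_inj.
Qed.

Lemma rsubmx_mul_row_const1 (S : pzRingType) m n (u : 'rV[S]_m) (A : 'M_(m, n)) :
  rsubmx (u *m row_mx A (const_mx 1 : 'cV_m)) 0 0 = \sum_i u 0 i.
Proof.
by rewrite mul_mx_row row_mxKr !mxE; apply: eq_bigr => i _; rewrite mxE mulr1.
Qed.

Lemma natrD_frac_inj (R : realFieldType) (a b : nat) (x y : R) :
  0 <= x < 1 -> 0 <= y < 1 -> a%:R + x = b%:R + y -> a = b.
Proof.
have le_ab (a' b' : nat) (x' y' : R) :
    0 <= x' -> y' < 1 -> a'%:R + x' = b'%:R + y' -> (a' <= b')%N.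
  move=> x'_ge0 y'_lt1 eq_ab; rewrite -ltnS -(ltr_nat R).
  by rewrite (le_lt_trans (y := a'%:R + x')) ?lerDl // eq_ab -natr1 ltrD2l.
move=> /andP[x_ge0 x_lt1] /andP[y_ge0 y_lt1] eq_ab.
by apply/eqP; rewrite eqn_leq (le_ab _ _ _ _ x_ge0 y_lt1) ?(le_ab _ _ _ _ y_ge0 x_lt1).
Qed.

(* [realFieldType] has no floor function; this one is correct for [0 <= r < N.+1]. *)
Fixpoint nat_floor (R : realFieldType) (N : nat) (r : R) : nat :=
  if N is N'.+1 then (if N%:R <= r then N else nat_floor N' r) else 0%N.

Lemma nat_floorP (R : realFieldType) N (r : R) : 0 <= r -> r < N.+1%:R ->
  (nat_floor N r)%:R <= r < (nat_floor N r).+1%:R.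
Proof.
move=> r_ge0; elim: N => [|N IHN] /= lt_rN; first by rewrite r_ge0.
by case: ifP => [-> // | /negbT]; rewrite -ltNge; apply: IHN.
Qed.

Lemma exists_enum_bounded_rows m (B : nat) (P : 'rV[int]_m -> Prop) :
  (forall y, P y -> forall j, `|y 0 j| <= B%:Z) ->
  exists s : seq 'rV[int]_m, uniq s /\ forall y, y \in s <-> P y.
Proof.
move=> boundP.
pose box := [seq \row_j ((f j : nat)%:Z - B%:Z) | f : {ffun 'I_m -> 'I_(B + B).+1}].
exists (undup [seq y <- box | excluded_middle_informative (P y)]).
split=> [|y]; first exact: undup_uniq.
rewrite mem_undup mem_filter; split=> [/andP[/sumboolP] //|Py].
apply/andP; split; first exact/sumboolP.
apply/mapP; exists [ffun j => inord (absz (y 0 j + B%:Z))]; first by rewrite mem_enum.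
apply/matrixP => i j; rewrite !mxE ffunE (ord1 i).
have /andP[lo hi] : - B%:Z <= y 0 j <= B%:Z by rewrite -ler_norml boundP.
have yB_ge0 : 0 <= y 0 j + B%:Z by rewrite -lerBlDr sub0r.
rewrite inordK; last by rewrite ltnS -lez_nat abszE ger0_norm // PoszD lerD2r.
by rewrite abszE ger0_norm // addrK.
Qed.

Section LatticeCone.

Variables (R : realFieldType) (d k : nat) (V : 'M[int]_(k.+1, d)).

(* Row [i] is [(v_i, 1)]: the simplex is the slice at height 1 of the cone over
   these rows. *)
Definition homog : 'M[int]_(k.+1, d + 1) := row_mx V (const_mx 1).

Lemma intmx_homog : intmx R homog = row_mx (vertR R V) (const_mx 1).
Proof. by rewrite map_row_mx map_const_mx. Qed.

Definition height (y : 'rV[int]_(d + 1)) : nat := absz (rsubmx y 0 0).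

Definition fundamental (y : 'rV[int]_(d + 1)) : Prop :=
  exists2 pi : 'rV[R]_k.+1, (forall i, 0 <= pi 0 i < 1) & intmx R y = pi *m intmx R homog.

Lemma intr_rsubmx_homog y (mu : 'rV[R]_k.+1) :
  intmx R y = mu *m intmx R homog -> (rsubmx y 0 0)%:~R = \sum_i mu 0 i.
Proof.
move=> /(congr1 (fun M => rsubmx M 0 0)).
by rewrite intmx_homog rsubmx_mul_row_const1 -map_rsubmx mxE.
Qed.

Lemma fundamental_heightP y : fundamental y ->
  [/\ rsubmx y 0 0 = (height y)%:Z, (height y <= k)%N & height y = 0%N -> y = 0].
Proof.
move=> [pi pi01 eq_y]; have sum_pi := intr_rsubmx_homog eq_y.
have pi_ge0 i : 0 <= pi 0 i by case/andP: (pi01 i).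
have y_ge0 : 0 <= rsubmx y 0 0.
  by rewrite -(ler0z R) sum_pi sumr_ge0.
have eq_height : rsubmx y 0 0 = (height y)%:Z by rewrite /height abszE ger0_norm.
split=> // [|height0].
  rewrite -ltnS -(ltr_nat R) [(height y)%:R]pmulrn -eq_height sum_pi.
  have -> : k.+1%:R = \sum_(i < k.+1) (1 : R) by rewrite sumr_const card_ord.
  apply: ltr_sum; first by apply/hasP; exists ord0; rewrite ?mem_index_enum.
  by move=> i _; case/andP: (pi01 i).
have pi0 : pi = 0.
  apply/matrixP => i j; rewrite (ord1 i) mxE.
  apply: (psumr_eq0P (P := xpredT) (F := fun i => pi 0 i)) => //.
  by rewrite -sum_pi eq_height height0.
by apply: (@intmx_inj R); rewrite eq_y pi0 mul0mx map_mx0.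
Qed.

Lemma fundamental0 : fundamental 0.
Proof. by exists 0 => [i|]; rewrite ?mul0mx ?map_mx0 // mxE lexx ltr01. Qed.

Lemma fundamental_bounded y : fundamental y ->
  forall j, `|y 0 j| <= (\sum_i \sum_j absz (homog i j))%N%:Z.
Proof.
move=> [pi pi01 eq_y] j.
rewrite -(ler_int R) intr_norm -pmulrn.
have -> : (y 0 j)%:~R = intmx R y 0 j by rewrite mxE.
rewrite eq_y mxE (le_trans (ler_norm_sum _ _ _)) // natr_sum.
apply: ler_sum => i _; rewrite natr_sum (bigD1 j) //= ler_wpDr ?sumr_ge0 //.
case/andP: (pi01 i) => pi_ge0 pi_lt1.
rewrite normrM ger0_norm // mxE -intr_norm -abszE -pmulrn.
by rewrite ler_piMl // ltW.
Qed.

Lemma fundamental_enum :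
  exists Y : seq 'rV[int]_(d + 1), uniq Y /\ forall y, y \in Y <-> fundamental y.
Proof. exact: exists_enum_bounded_rows fundamental_bounded. Qed.

Definition natrow (c : seq nat) : 'rV[int]_k.+1 := \row_i (nth 0%N c i)%:Z.

Lemma rsubmx_cone y c : size c = k.+1 ->
  rsubmx (y + natrow c *m homog) 0 0 = rsubmx y 0 0 + (sumn c)%:Z.
Proof.
have -> : rsubmx (y + natrow c *m homog) 0 0 =
    rsubmx y 0 0 + rsubmx (natrow c *m homog) 0 0 by rewrite !mxE.
move=> size_c; rewrite rsubmx_mul_row_const1; congr (_ + _).
under eq_bigr do rewrite mxE.
rewrite sumnE (big_nth 0%N) size_c big_mkord.
by rewrite (big_morph Posz PoszD (erefl (Posz 0))).
Qed.

Definition cone_point (y : 'rV[int]_(d + 1)) (c : seq nat) : 'rV[int]_d :=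
  lsubmx (y + natrow c *m homog).

Lemma cone_point_in_simplex (t : nat) y c :
  (0 < t)%N -> fundamental y -> size c = k.+1 ->
  rsubmx y 0 0 + (sumn c)%:Z = t%:Z -> in_dilated_simplex R t V (cone_point y c).
Proof.
move=> t_gt0 [pi pi01 eq_y] size_c height_t.
pose mu : 'rV[R]_k.+1 := pi + intmx R (natrow c).
have eq_cone : intmx R (y + natrow c *m homog) = mu *m intmx R homog.
  by rewrite map_mxD map_mxM eq_y mulmxDl.
have eq_x : intmx R (cone_point y c) = mu *m vertR R V.
  by rewrite map_lsubmx eq_cone intmx_homog mul_mx_row row_mxKl.
have sum_mu : \sum_i mu 0 i = t%:R.
  by rewrite -(intr_rsubmx_homog eq_cone) rsubmx_cone // height_t -pmulrn.
have t_neq0 : t%:R != 0 :> R by rewrite pnatr_eq0 -lt0n.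
exists (fun i => mu 0 i / t%:R); split; last split.
- by move=> i; rewrite divr_ge0 // !mxE addr_ge0 //; case/andP: (pi01 i).
- by rewrite -mulr_suml sum_mu divff.
- rewrite eq_x mulmx_sum_row scaler_sumr; apply: eq_bigr => i _.
  by rewrite scalerA mulrC divfK.
Qed.

Lemma in_simplex_cone_point (t : nat) x : (0 < t)%N -> in_dilated_simplex R t V x ->
  exists y c, [/\ fundamental y, size c = k.+1,
    rsubmx y 0 0 + (sumn c)%:Z = t%:Z & cone_point y c = x].
Proof.
move=> t_gt0 [lam [lam_ge0 [sum_lam eq_x]]].
pose mu : 'rV[R]_k.+1 := \row_i (t%:R * lam i).
have mu_ge0 i : 0 <= mu 0 i by rewrite mxE mulr_ge0.
have sum_mu : \sum_i mu 0 i = t%:R.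
  by under eq_bigr do rewrite mxE; rewrite -mulr_sumr sum_lam mulr1.
have {}eq_x : intmx R x = mu *m vertR R V.
  rewrite eq_x mulmx_sum_row scaler_sumr; apply: eq_bigr => i _.
  by rewrite scalerA mxE.
have mu_lt i : mu 0 i < t.+1%:R.
  rewrite (le_lt_trans (y := t%:R)) ?ltr_nat // -sum_mu.
  by rewrite (bigD1 i) //= ler_wpDr ?sumr_ge0.
pose a i := nat_floor t (mu 0 i).
pose c := [seq a i | i <- enum 'I_k.+1].
have size_c : size c = k.+1 by rewrite size_map size_enum_ord.
have natrow_c i : intmx R (natrow c) 0 i = (a i)%:R.
  by rewrite !mxE (nth_map ord0) ?size_enum_ord // nth_ord_enum -pmulrn.
pose y := row_mx x (const_mx t%:Z) - natrow c *m homog.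
have x_t : row_mx x (const_mx t%:Z) = y + natrow c *m homog by rewrite subrK.
exists y, c; split => //.
- exists (mu - intmx R (natrow c)) => [i|].
    have -> : (mu - intmx R (natrow c)) 0 i = mu 0 i - (a i)%:R.
      by rewrite -natrow_c !mxE.
    have /andP[le_a lt_a] := nat_floorP (mu_ge0 i) (mu_lt i).
    by rewrite subr_ge0 le_a ltrBlDr addrC natr1.
  rewrite mulmxBl map_mxB map_mxM; congr (_ - _).
  rewrite intmx_homog mul_mx_row map_row_mx map_const_mx -eq_x; congr row_mx.
  apply/matrixP => i j; rewrite !ord1 !mxE.
  transitivity (t%:R : R); first by rewrite pmulrn.
  by rewrite -sum_mu; apply: eq_bigr => l _; rewrite !mxE mulr1.
- by rewrite -rsubmx_cone // -x_t row_mxKr mxE.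
- by rewrite /cone_point -x_t row_mxKl.
Qed.

Lemma sum_bin_height_mod n (Y : seq 'rV[int]_(d + 1)) :
  (1 < n)%N -> (k <= d)%N -> uniq Y -> (forall y, y \in Y <-> fundamental y) ->
  \sum_(y <- Y) 'C(tfactor n d - height y + k, k) = 1 %[mod n].
Proof.
move=> n_gt1 le_kd uniqY memY.
rewrite -modn_summ.
rewrite (eq_big_seq (fun y : 'rV_(d + 1) => (nat_of_bool (y == 0%R) %% n)%N)) ?modn_summ.
  by rewrite -big_mkcond sum1_count count_uniq_mem // (memY 0).2 //; apply: fundamental0.
move=> y /memY /fundamental_heightP[_ le_hk height0].
have le_ht : (height y <= tfactor n d)%N.
  by rewrite (leq_trans le_hk) // (leq_trans le_kd) // ltnW // tfactor_gt.
rewrite addnBAC // -addnBA // bin_tfactorD ?leq_subr //.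
have [->|y_neq0] := eqVneq y 0; first by rewrite /height mxE mxE subn0 eqxx.
have h_neq0 : height y != 0%N by apply: contra_neq y_neq0 => /height0.
congr (nat_of_bool _ %% _)%N; apply/negbTE.
rewrite neq_ltn ltn_subrL !lt0n h_neq0 /=.
by rewrite -lt0n (leq_trans _ le_hk) // lt0n.
Qed.

Hypothesis homog_free : row_free (intmx R homog).

Lemma cone_point_inj (t : int) y y' c c' :
  fundamental y -> fundamental y' -> size c = k.+1 -> size c' = k.+1 ->
  rsubmx y 0 0 + (sumn c)%:Z = t -> rsubmx y' 0 0 + (sumn c')%:Z = t ->
  cone_point y c = cone_point y' c' -> y = y' /\ c = c'.
Proof.
move=> [pi pi01 eq_y] [pi' pi'01 eq_y'] size_c size_c' height_t height_t' eq_cone.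
have eq_sum : y + natrow c *m homog = y' + natrow c' *m homog.
  rewrite -[LHS]hsubmxK -[RHS]hsubmxK; congr row_mx; first exact: eq_cone.
  apply/matrixP => i j; rewrite !ord1.
  by rewrite !rsubmx_cone // height_t height_t'.
have eq_mu : pi + intmx R (natrow c) = pi' + intmx R (natrow c').
  apply: (row_free_inj homog_free).
  by rewrite !mulmxDl -eq_y -eq_y' -!map_mxM -!map_mxD eq_sum.
suff eq_c : c = c' by split=> //; move: eq_sum; rewrite eq_c => /addIr.
apply: (@eq_from_nth _ 0%N) => [|i]; first by rewrite size_c size_c'.
rewrite size_c => lt_ik; pose i' := Ordinal lt_ik.
have := congr1 (fun M : 'rV[R]_k.+1 => M 0 i') eq_mu; rewrite !mxE -!pmulrn => eq_i.
by apply: (natrD_frac_inj (pi01 i') (pi'01 i')); rewrite addrC eq_i addrC.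
Qed.

Lemma dilated_simplex_enum (t : nat) (Y : seq 'rV[int]_(d + 1)) :
  (0 < t)%N -> (k <= t)%N -> uniq Y -> (forall y, y \in Y <-> fundamental y) ->
  exists s : seq 'rV[int]_d, [/\ uniq s,
    forall x, x \in s <-> in_dilated_simplex R t V x &
    size s = \sum_(y <- Y) 'C(t - height y + k, k)].
Proof.
move=> t_gt0 le_kt uniqY memY.
have fundY y : y \in Y -> fundamental y by move/memY.
have compY y c : y \in Y -> c \in compositions k (t - height y) ->
    size c = k.+1 /\ rsubmx y 0 0 + (sumn c)%:Z = t%:Z.
  move=> /fundY /fundamental_heightP[-> le_hk _].
  rewrite mem_compositions => /andP[/eqP size_c /eqP ->]; split=> //.
  by rewrite -PoszD subnKC // (leq_trans le_hk).
exists [seq cone_point y c | y <- Y, c <- compositions k (t - height y)]; split.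
- apply: allpairs_uniq_dep => // [y _|]; first exact: compositions_uniq.
  move=> _ _ /allpairsPdep[y [c [yY cY ->]]] /allpairsPdep[y' [c' [y'Y c'Y ->]]] /=.
  have [size_c eq_c] := compY y c yY cY.
  have [size_c' eq_c'] := compY y' c' y'Y c'Y.
  by case/(cone_point_inj (fundY y yY) (fundY y' y'Y) size_c size_c' eq_c eq_c') => -> ->.
- move=> x; split=> [/allpairsPdep[y [c [yY cY ->]]] | /(in_simplex_cone_point t_gt0)].
    have [size_c eq_c] := compY y c yY cY.
    by apply: cone_point_in_simplex => //; apply: fundY.
  move=> [y [c [fund_y size_c eq_c <-]]]; apply/allpairsPdep; exists y, c.
  have yY : y \in Y by apply/memY.
  split=> //; have [eq_h _ _] := fundamental_heightP fund_y.
  move: eq_c; rewrite eq_h -PoszD => -[<-].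
  by rewrite mem_compositions size_c addKn !eqxx.
- rewrite size_allpairs_dep sumnE big_map.
  by apply: eq_bigr => y _; rewrite size_compositions.
Qed.

End LatticeCone.

Lemma affinely_independent_leq (R : realFieldType) d k (V : 'M[int]_(k.+1, d)) :
  affinely_independent R V -> (k <= d)%N.
Proof.
move=> /eqP rank_full.
have := rank_leq_col (row_mx (vertR R V) (const_mx 1 : 'cV[R]_k.+1)).
by rewrite rank_full addn1 ltnS.
Qed.

Theorem mainTheorem4 (d n : nat) (hd : (1 <= d)%N) (hn : (1 < n)%N)
    (R : realFieldType) (k : nat) (V : 'M[int]_(k.+1, d))
    (hV : affinely_independent R V) :
  exists s : seq 'rV[int]_d,
    uniq s /\
    (forall x : 'rV[int]_d, x \in s <-> in_dilated_simplex R (tfactor n d) V x) /\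
    size s = 1 %[mod n].
Proof.
have le_kd := affinely_independent_leq hV.
have homog_free : row_free (intmx R (homog V)) by rewrite intmx_homog.
have [Y [uniqY memY]] := fundamental_enum R V.
have [|s [uniq_s mem_s size_s]] :=
    dilated_simplex_enum homog_free (tfactor_gt0 n d) _ uniqY memY.
  exact: leq_trans le_kd (ltnW (tfactor_gt d hn)).
by exists s; rewrite size_s (sum_bin_height_mod hn le_kd uniqY memY).
Qed.
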